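(* Let $(X,T)$ be a topological dynamical system and $c_S^n$ a system of coefficients for which the limits defining $\operatorname{Asc}$ and $\operatorname{Int}$ exist. For each open cover $\mathscr U$ of $X$, $\operatorname{Asc}(X,\mathscr U,T)\le h_{\mathrm{top}}(X,T)$, and moreover $\operatorname{Int}(X,\mathscr U,T)\le h_{\mathrm{top}}(X,\mathscr U,T)\le h_{\mathrm{top}}(X,T)$.
   Context: A system of coefficients is a family $\{c_S^n:n\in\mathbb N,S\subset n^*\}$ with $c_S^n\ge0$, $\sum_{S\subset n^*}c_S^n=1$, $c_{S^c}^n=c_S^n$, where $n^*=\{0,\dots,n-1\}$, $S^c=n^*\setminus S$ (the limits below exist e.g. when $c_S^n=\int x^{|S|}(1-x)^{n-|S|}\lambda(dx)$ for a symmetric probability measure $\lambda$ on $[0,1]$). $(X,T)$: compact Hausdorff, $T$ continuous; $\mathscr U_S=\bigvee_{i\in S}T^{-i}\mathscr U$; $N$ = minimal subcover cardinality. $\operatorname{Asc}(X,\mathscr U,T)=\lim_n\frac1n\sum_Sc_S^n\log N(\mathscr U_S)$, $\operatorname{Int}(X,\mathscr U,T)=\lim_n\frac1n\sum_Sc_S^n\log\frac{N(\mathscr U_S)N(\mathscr U_{S^c})}{N(\mathscr U_{n^*})}$, $h_{\mathrm{top}}(X,\mathscr U,T)=\lim_n\frac1n\log N(\mathscr U_{n^*})$, $h_{\mathrm{top}}(X,T)=\sup_{\mathscr U}h_{\mathrm{top}}(X,\mathscr U,T)$. *)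

From HB Require Import structures.
From mathcomp Require Import all_boot all_order all_algebra.
From mathcomp Require Import all_classical all_reals all_analysis.
Set Implicit Arguments. Unset Strict Implicit. Unset Printing Implicit Defensive.
Import Order.TTheory GRing.Theory Num.Theory numFieldNormedType.Exports.
Local Open Scope classical_set_scope.
Local Open Scope ring_scope.

Section Defs.
Variables (X : topologicalType).

Definition open_cover (U : set (set X)) : Prop :=
  (forall A, U A -> open A) /\ (forall x : X, exists2 A, U A & A x).

Definition has_subcover_of_size (V : set (set X)) (k : nat) : Prop :=
  exists s : seq (set X), size s = k /\ (forall A, A \in s -> V A) /\
    (forall x : X, exists2 A, A \in s & A x).

(* N(V): minimal cardinality of a (finite) subcover of V (0 by convention
   if V has no finite subcover, which never happens for open covers of a
   compact space). *)
Definition Ncov (V : set (set X)) : nat :=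
  match pselect (exists k, `[< has_subcover_of_size V k >]) with
  | left h => ex_minn h
  | right _ => 0%N
  end.

(* U_S = \/_{i in S} T^{-i} U, for S a subset of {0,...,n-1};
   the empty join is the trivial cover {X}. *)
Definition join_cover (T : X -> X) (U : set (set X)) (n : nat)
    (S : {set 'I_n}) : set (set X) :=
  [set V | exists f : 'I_n -> set X, (forall i, i \in S -> U (f i)) /\
     V = [set x | forall i : 'I_n, i \in S -> f i (iter i T x)]].

Variable R : realType.

Definition coef_system (c : forall n : nat, {set 'I_n} -> R) : Prop :=
  forall n : nat,
    (forall S, 0 <= c n S) /\ (\sum_(S : {set 'I_n}) c n S = 1) /\
    (forall S, c n (~: S) = c n S).

Definition NS (T : X -> X) (U : set (set X)) (n : nat) (S : {set 'I_n}) : R :=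
  (Ncov (join_cover T U S))%:R.

Definition asc_seq (c : forall n : nat, {set 'I_n} -> R) (T : X -> X)
    (U : set (set X)) (n : nat) : R :=
  n%:R^-1 * \sum_(S : {set 'I_n}) c n S * ln (NS T U S).

Definition int_seq (c : forall n : nat, {set 'I_n} -> R) (T : X -> X)
    (U : set (set X)) (n : nat) : R :=
  n%:R^-1 * \sum_(S : {set 'I_n}) c n S *
     ln (NS T U S * NS T U (~: S) / NS T U [set: 'I_n]).

Definition htop_seq (T : X -> X) (U : set (set X)) (n : nat) : R :=
  n%:R^-1 * ln (NS T U [set: 'I_n]).

Definition Asc c T U : R := limn (asc_seq c T U).
Definition Int c T U : R := limn (int_seq c T U).
Definition htop_cover T U : R := limn (htop_seq T U).
Definition htop (T : X -> X) : \bar R :=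
  ereal_sup [set (htop_cover T U)%:E | U in open_cover].
End Defs.

From HB Require Import structures.
From mathcomp Require Import all_boot all_order all_algebra.
From mathcomp Require Import all_classical all_reals all_analysis.
From mathcomp Require Import lra.

Set Implicit Arguments.
Unset Strict Implicit.
Unset Printing Implicit Defensive.
Import Order.TTheory GRing.Theory Num.Theory numFieldNormedType.Exports.
Local Open Scope classical_set_scope.
Local Open Scope ring_scope.

(** Since [U_{n*}] refines every [U_S], [N(U_S) <= N(U_{n*})], and therefore
   also [N(U_S) N(U_{S^c}) / N(U_{n*}) <= N(U_{n*})]. Averaging against the
   probability weights [c_S^n] bounds the n-th terms of [Asc] and [Int] by
   [log N(U_{n*}) / n]. Because [U_{(m+n)*}] is refined by the products of
   members of [U_{m*}] and of [T^{-m}U_{n*}], [log N(U_{n*})] is subadditive,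
   so by Fekete's lemma [log N(U_{n*}) / n] converges, to [h_top(X,U,T)],
   which is one of the values whose supremum is [h_top(X,T)]. *)

Section Subcovers.
Variable X : topologicalType.
Implicit Types (V W : set (set X)) (T : X -> X) (U : set (set X)).

Lemma Ncov_min V k : has_subcover_of_size V k -> (Ncov V <= k)%N.
Proof.
move=> h; rewrite /Ncov; case: pselect => [e|//].
by case: ex_minnP => m _; apply; exact/asboolP.
Qed.

Lemma has_subcover_Ncov V k :
  has_subcover_of_size V k -> has_subcover_of_size V (Ncov V).
Proof.
move=> h; rewrite /Ncov; case: pselect => [e|[]]; last by exists k; exact/asboolP.
by case: ex_minnP => m /asboolP.
Qed.

Lemma has_subcover_refine V W k :
  (forall A, V A -> exists2 B, W B & A `<=` B) ->
  has_subcover_of_size V k -> has_subcover_of_size W k.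
Proof.
move=> VW [s [<- [sV scov]]].
have witness A : exists B, V A -> W B /\ A `<=` B.
  have [/VW[B WB AB]|nVA] := pselect (V A); first by exists B.
  by exists set0.
have [g hg] := choice witness.
exists (map g s); split; first by rewrite size_map.
split=> [_ /mapP[A As ->]|x]; first exact: (hg A (sV A As)).1.
have [A As Ax] := scov x; exists (g A); first exact: map_f.
exact: (hg A (sV A As)).2.
Qed.

Lemma join_coverS T U n (S S' : {set 'I_n}) k : S \subset S' ->
  has_subcover_of_size (join_cover T U S') k ->
  has_subcover_of_size (join_cover T U S) k.
Proof.
move=> /fintype.subsetP SS'; apply: has_subcover_refine => _ [f [fU ->]].
exists [set x | forall i, i \in S -> f i (iter i T x)].
  by exists f; split=> // i /SS'; exact: fU.
by move=> x hx i /SS'; exact: hx.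
Qed.

(* The join over [{0,...,n-1}], with the cover indexed by [nat] so that joins
   of different lengths can be concatenated. *)
Definition iter_join T U n : set (set X) :=
  [set V | exists f : nat -> set X, (forall k, (k < n)%N -> U (f k)) /\
     V = [set x | forall k, (k < n)%N -> f k (iter k T x)]].

Lemma join_cover_setT T U n : join_cover T U [set: 'I_n] = iter_join T U n.
Proof.
apply/seteqP; split=> _ [f [fU ->]].
- exists (fun k => if insub k is Some i then f i else set0); split.
    move=> k kn; case: insubP => [i _ _|]; last by rewrite kn.
    exact: fU (finset.in_setT i).
  apply/seteqP; split=> x /= hx.
    move=> k kn; case: insubP => [i _ <-|]; last by rewrite kn.
    exact: hx (finset.in_setT i).
  move=> i _; have := hx i (ltn_ord i).
  by case: insubP => [j _ /val_inj ->|]; last rewrite ltn_ord.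
- exists (fun i : 'I_n => f i); split=> [i _|]; first exact: fU.
  apply/seteqP; split=> x /= hx i; first by move=> _; exact: hx (ltn_ord i).
  by move=> lt_in; exact: hx (Ordinal lt_in) (finset.in_setT _).
Qed.

Lemma has_subcover_iter_join0 T U : has_subcover_of_size (iter_join T U 0) 1.
Proof.
exists [:: setT]; split=> //; split=> [A|x]; last by exists setT; rewrite ?inE.
rewrite inE => /eqP ->; exists (fun=> setT); split=> [//|].
by apply/seteqP; split=> x.
Qed.

Lemma has_subcover_iter_join1 T U k :
  has_subcover_of_size U k -> has_subcover_of_size (iter_join T U 1) k.
Proof.
apply: has_subcover_refine => A UA.
exists [set x | forall j, (j < 1)%N -> A (iter j T x)].
  by exists (fun=> A).
by move=> x Ax [].
Qed.

Lemma has_subcover_iter_joinD T U m n a b :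
  has_subcover_of_size (iter_join T U m) a ->
  has_subcover_of_size (iter_join T U n) b ->
  has_subcover_of_size (iter_join T U (m + n)) (a * b).
Proof.
move=> [s [<- [sV scov]]] [t [<- [tV tcov]]].
have witness p A : exists g : nat -> set X, iter_join T U p A ->
   (forall k, (k < p)%N -> U (g k)) /\
   (forall x, A x -> forall k, (k < p)%N -> g k (iter k T x)).
  have [[g [gU ->]]|nA] := pselect (iter_join T U p A); last by exists (fun=> set0).
  by exists g.
have [F hF] := choice (witness m); have [G hG] := choice (witness n).
pose h A B k := if (k < m)%N then F A k else G B (k - m)%N.
exists [seq [set x | forall k, (k < m + n)%N -> h A B k (iter k T x)]
         | A <- s, B <- t].
split; first by rewrite size_allpairs.
split=> [C /allpairsP[[A B] [/= As Bt ->]]|x].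
  exists (h A B); split=> // k kmn; rewrite /h; case: ifP => km.
    exact: (hF A (sV A As)).1.
  by apply: (hG B (tV B Bt)).1; rewrite ltn_subLR // leqNgt km.
have [A As Ax] := scov x; have [B Bt Bx] := tcov (iter m T x).
exists [set x | forall k, (k < m + n)%N -> h A B k (iter k T x)].
  by apply/allpairsP; exists (A, B).
move=> k kmn; rewrite /h; case: ifP => km; first exact: (hF A (sV A As)).2.
have mk : (m <= k)%N by rewrite leqNgt km.
have := (hG B (tV B Bt)).2 _ Bx (k - m)%N.
by rewrite -iterD subnK //; apply; rewrite ltn_subLR.
Qed.

Lemma has_subcover_iter_join T U k n :
  has_subcover_of_size U k -> has_subcover_of_size (iter_join T U n) (k ^ n).
Proof.
move=> Uk; elim: n => [|n IHn]; first exact: has_subcover_iter_join0.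
by rewrite expnSr -addn1; apply: has_subcover_iter_joinD IHn _;
  exact: has_subcover_iter_join1.
Qed.

End Subcovers.

(* [compact_cover] is stated for pointed spaces; a point is available as soon
   as the space is nonempty. *)
Definition pointed_at (X : topologicalType) (x0 : X) : Type := X.
HB.instance Definition _ (X : topologicalType) (x0 : X) :=
  Topological.on (@pointed_at X x0).
HB.instance Definition _ (X : topologicalType) (x0 : X) :=
  isPointed.Build (@pointed_at X x0) x0.

Lemma compact_open_cover_subcover (X : topologicalType) (U : set (set X)) :
  compact [set: X] -> open_cover U -> exists k, has_subcover_of_size U k.
Proof.
move=> cX [oU Ucov].
have [[x0 _]|X0] := pselect (exists x : X, True); last first.
  by exists 0%N, [::]; split=> //; split=> // x; case: X0; exists x.
have /(_ (set X) U id oU) : cover_compact (setT : set (@pointed_at X x0)).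
  by rewrite -compact_cover.
case=> [x _ | D DU Dcov]; first by have [A UA Ax] := Ucov x; exists A.
exists (size (finmap.enum_fset D)), (finmap.enum_fset D); split=> //; split.
  by move=> A /DU; rewrite inE.
by move=> x; have [A DA Ax] := Dcov x I; exists A.
Qed.

Lemma subadditive_iter (R : realType) (a : nat -> R) :
  (forall m n, a (m + n)%N <= a m + a n) ->
  forall m q r, a (q * m + r)%N <= q%:R * a m + a r.
Proof.
move=> sa m; elim=> [|q IH] r; first by rewrite mul0n add0n mul0r add0r.
rewrite mulSn -addnA mulrSr mulrDl mul1r.
have := IH r; have := sa m (q * m + r)%N; lra.
Qed.

(* Fekete's lemma: the limit is the infimum of the [a n / n], [n > 0]. *)
Lemma subadditive_cvgn (R : realType) (a : nat -> R) : (forall n, 0 <= a n) ->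
  (forall m n, a (m + n)%N <= a m + a n) -> cvgn (fun n => n%:R^-1 * a n).
Proof.
move=> a0 sa.
pose E := [set y : R | exists2 n, (0 < n)%N & y = n%:R^-1 * a n].
have hiE : has_inf E.
  split; first by exists (1%:R^-1 * a 1%N), 1%N.
  by exists 0 => y [n _ ->]; rewrite mulr_ge0 // invr_ge0.
apply/cvg_ex; exists (inf E); apply/cvgrPdist_lt => e e0.
have e20 : 0 < e / 2 by rewrite divr_gt0.
have [_ [m m0 ->] ym] := inf_adherent e20 hiE.
pose M := \sum_(r < m) a r.
have aM r : (r < m)%N -> a r <= M.
  move=> rm; rewrite /M (bigD1 (Ordinal rm)) //= lerDl.
  exact: sumr_ge0.
have M0 : 0 <= M by exact: sumr_ge0.
exists (Num.truncn (M / (e / 2))).+1 => // n /= Nn.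
have n0 : (0 < n)%N by rewrite (leq_trans _ Nn).
have n0R : 0 < n%:R :> R by rewrite ltr0n.
have m0R : 0 < m%:R :> R by rewrite ltr0n.
have inf_le : inf E <= n%:R^-1 * a n.
  by apply: ge_inf; [case: hiE | exists n].
rewrite distrC ger0_norm ?subr_ge0 //.
have a_le : a n <= (n %/ m)%:R * a m + M.
  rewrite {1}(divn_eq n m) (le_trans (subadditive_iter sa _ _ _)) // lerD2l.
  by apply: aM; rewrite ltn_mod.
have quot_le : (n %/ m)%:R / n%:R * a m <= m%:R^-1 * a m.
  apply: ler_wpM2r => //.
  by rewrite ler_pdivrMr // mulrC ler_pdivlMr // -natrM ler_nat leq_divM.
have rem_lt : n%:R^-1 * M < e / 2.
  have : M / (e / 2) < n%:R.
    by apply: (lt_le_trans (truncnS_gt _)); rewrite ler_nat.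
  by rewrite ltr_pdivrMr // => M_lt; rewrite mulrC ltr_pdivrMr // mulrC.
have : n%:R^-1 * a n <= n%:R^-1 * ((n %/ m)%:R * a m + M).
  by rewrite ler_wpM2l ?invr_ge0.
rewrite mulrDr mulrA [_^-1 * _]mulrC; lra.
Qed.

Lemma ln_natr_ge0 (R : realType) (k : nat) : 0 <= ln (k%:R : R).
Proof. by case: k => [|k]; [rewrite ln0 | rewrite ln_ge0 // ler1n]. Qed.

Lemma ler_ln_natr (R : realType) (x : R) (k : nat) :
  x <= k%:R -> ln x <= ln (k%:R : R).
Proof.
move=> xk; have [x0|x0] := leP x 0; first by rewrite ln0 // ln_natr_ge0.
by rewrite ler_ln // posrE (lt_le_trans x0).
Qed.

Lemma ln_natr_submul (R : realType) (p q r : nat) :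
  (r <= p * q)%N -> ln (r%:R : R) <= ln (p%:R : R) + ln (q%:R : R).
Proof.
move=> rpq; have [->|r0] := posnP r.
  by rewrite ln0 // addr_ge0 // ln_natr_ge0.
have /andP[p0 q0] : (0 < p)%N && (0 < q)%N.
  by rewrite -muln_gt0 (leq_trans r0 rpq).
by rewrite -lnM ?posrE ?ltr0n // -natrM ler_ln_natr // ler_nat.
Qed.

Lemma mul_divr_le (R : realFieldType) (a b N : R) :
  0 <= a -> 0 <= b -> a <= N -> b <= N -> a * b / N <= N.
Proof.
move=> a0 b0 aN bN; have [->|N0] := eqVneq N 0; first by rewrite invr0 mulr0.
by rewrite -{2}(mulfK N0 N) ler_wpM2r ?invr_ge0 ?(le_trans a0) // ler_pM.
Qed.

Lemma coef_system_avg_le (R : realType) (c : forall n, {set 'I_n} -> R) n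
    (g : {set 'I_n} -> R) (b : R) :
  coef_system c -> (forall S, g S <= b) -> \sum_S c n S * g S <= b.
Proof.
move=> /(_ n) [c0 [c1 _]] gb.
rewrite -[leRHS]mul1r -c1 mulr_suml; apply: ler_sum => S _.
exact: ler_wpM2l.
Qed.

Section CoverEntropy.
Variables (R : realType) (X : topologicalType) (T : X -> X) (U : set (set X)).
Hypothesis Ufin : exists k, has_subcover_of_size U k.

Lemma has_subcover_join_cover n (S : {set 'I_n}) :
  exists k, has_subcover_of_size (join_cover T U S) k.
Proof.
have [k Uk] := Ufin; exists (k ^ n)%N.
by apply: (join_coverS (finset.subsetT S)); rewrite join_cover_setT;
  exact: has_subcover_iter_join.
Qed.

Lemma NS_le_setT n (S : {set 'I_n}) : NS R T U S <= NS R T U [set: 'I_n].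
Proof.
rewrite /NS ler_nat; apply/Ncov_min/(join_coverS (finset.subsetT S)).
by have [k] := has_subcover_join_cover [set: 'I_n]; exact: has_subcover_Ncov.
Qed.

Lemma Ncov_join_cover_setTD m n :
  (Ncov (join_cover T U [set: 'I_(m + n)]) <=
   Ncov (join_cover T U [set: 'I_m]) * Ncov (join_cover T U [set: 'I_n]))%N.
Proof.
have Nspec p : has_subcover_of_size (iter_join T U p)
    (Ncov (join_cover T U [set: 'I_p])).
  have [k] := has_subcover_join_cover [set: 'I_p].
  by rewrite join_cover_setT; exact: has_subcover_Ncov.
by rewrite join_cover_setT; apply/Ncov_min/has_subcover_iter_joinD.
Qed.

Lemma cvgn_htop_seq : cvgn (htop_seq R T U).
Proof.
apply: (subadditive_cvgn (a := fun n => ln (NS R T U [set: 'I_n]))).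
  by move=> n; exact: ln_natr_ge0.
by move=> m n; apply: ln_natr_submul; exact: Ncov_join_cover_setTD.
Qed.

Variable c : forall n : nat, {set 'I_n} -> R.
Hypothesis csys : coef_system c.

Lemma asc_seq_le_htop_seq n : asc_seq c T U n <= htop_seq R T U n.
Proof.
rewrite ler_wpM2l ?invr_ge0 // coef_system_avg_le // => S.
exact/ler_ln_natr/NS_le_setT.
Qed.

Lemma int_seq_le_htop_seq n : int_seq c T U n <= htop_seq R T U n.
Proof.
rewrite ler_wpM2l ?invr_ge0 // coef_system_avg_le // => S.
by apply/ler_ln_natr/mul_divr_le; rewrite ?NS_le_setT.
Qed.

End CoverEntropy.

Theorem proposition2p10 (R : realType) (X : topologicalType) (T : X -> X)
  (c : forall n : nat, {set 'I_n} -> R) (U : set (set X)) :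
  compact [set: X] -> hausdorff_space X -> continuous T ->
  coef_system c -> open_cover U ->
  cvgn (asc_seq c T U) -> cvgn (int_seq c T U) ->
  ((Asc c T U)%:E <= htop R T)%E /\
  Int c T U <= htop_cover R T U /\ ((htop_cover R T U)%:E <= htop R T)%E.
Proof.
move=> cX _ _ csys Ucov asc_cvg int_cvg.
have Ufin := compact_open_cover_subcover cX Ucov.
have htop_cvg : cvgn (htop_seq R T U) by exact: cvgn_htop_seq.
have htop_cover_le : ((htop_cover R T U)%:E <= htop R T)%E.
  by apply: ereal_sup_ubound; exists U.
split; last split=> //.
  apply: le_trans htop_cover_le; rewrite lee_fin; apply: ler_lim => //.
  by apply: nearW => n; apply: asc_seq_le_htop_seq.
by apply: ler_lim => //; apply: nearW => n; apply: int_seq_le_htop_seq.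
Qed.
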